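(* Let $q\in\mathbb{C}$, $|q|<1$. For all $u,v\in\mathfrak{A}^0_{\mathrm{G}}$, $$\mathfrak{z}_q[u*_{\mathrm{G}}v]=\mathfrak{z}_q[u\sqcup\!\sqcup v]=\mathfrak{z}_q[u]\,\mathfrak{z}_q[v].$$
   Context: Let $Y_{\mathrm{G}}=\{z_{t,s}:t,s\in\mathbb{Z},\,0\le t\le s\}$ and $\mathfrak{A}_{\mathrm{G}}$ the free noncommutative $\mathbb{Q}$-algebra on $Y_{\mathrm{G}}$ (unit $\mathbf{1}$). $\mathfrak{A}^0_{\mathrm{G}}$ is the span of words $z_{t_1,s_1}\cdots z_{t_d,s_d}$ ($d\ge1$) with $t_1\ge1$. The stuffle $*_{\mathrm{G}}$ is bilinear with $\mathbf{1}*u=u*\mathbf{1}=u$ and $(z_{t,s}u)*(z_{t',s'}v)=z_{t,s}(u*z_{t',s'}v)+z_{t',s'}(z_{t,s}u*v)+z_{t+t',s+s'}(u*v)$. Map $\mathfrak{A}_{\mathrm{G}}$ into $\mathbb{Q}\langle\pi,y\rangle$ by the algebra homomorphism $z_{t,s}\mapsto\rho^t\pi^{s-t}y$, $\rho=\pi-\mathbf{1}$; elements of $\mathfrak{A}_{\mathrm{G}}$ are identified with their images. The shuffle $\sqcup\!\sqcup$ on $\mathbb{Q}\langle\pi,y\rangle$: bilinear, $\mathbf{1}\sqcup\!\sqcup u=u\sqcup\!\sqcup\mathbf{1}=u$, $(yu)\sqcup\!\sqcup v=u\sqcup\!\sqcup(yv)=y(u\sqcup\!\sqcup v)$, $\pi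 u\sqcup\!\sqcup\pi v=\pi(u\sqcup\!\sqcup\pi v)+\pi(\pi u\sqcup\!\sqcup v)-\pi(u\sqcup\!\sqcup v)$. Realization: let $\Phi$ be the algebra homomorphism from $\mathbb{Q}\langle\pi,y\rangle$ to operators on power series in $t$ with $\Phi(\pi)=\mathbf{P}$, $\mathbf{P}[f](t)=\sum_{k\ge0}f(q^kt)$, and $\Phi(y)=$ multiplication by $t/(1-t)$; for $W$ in the image of $\mathfrak{A}^0_{\mathrm{G}}$ set $\mathfrak{z}_q[W]=\Phi(W)[1]$ evaluated at $t=1$. (For a word, $\mathfrak{z}_q[z_{t_1,s_1}\cdots z_{t_d,s_d}]=\sum_{k_1>\dots>k_d>0}\prod_j q^{k_jt_j}(1-q^{k_j})^{-s_j}$.) *)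

From mathcomp Require Import all_boot all_order all_algebra.
From mathcomp Require Import reals.
From mathcomp Require Import complex.

Set Implicit Arguments.
Unset Strict Implicit.
Unset Printing Implicit Defensive.

Import Order.TTheory GRing.Theory Num.Theory.
Local Open Scope ring_scope.

(* An element of the free noncommutative Q-algebra on an alphabet A is
   represented by a finite formal linear combination [:: (c1, w1); ...]
   meaning c1 w1 + ... ; all maps below are defined (bi)linearly on such
   representations, and z_q is a linear functional, so nothing depends on
   the chosen representation. *)
Definition lc (A : Type) := seq (rat * seq A).

Definition lc_one (A : Type) : lc A := [:: (1, [::])].
Definition lc_cons (A : Type) (a : A) (x : lc A) : lc A :=
  [seq (p.1, a :: p.2) | p <- x].
Definition lc_scale (A : Type) (c : rat) (x : lc A) : lc A :=
  [seq (c * p.1, p.2) | p <- x].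
Definition lc_mul (A : Type) (x y : lc A) : lc A :=
  [seq (p.1 * r.1, p.2 ++ r.2) | p <- x, r <- y].
Definition lc_bil (A B : Type) (f : seq A -> seq A -> lc B) (x y : lc A) : lc B :=
  flatten [seq [seq (p.1 * r.1 * s.1, s.2) | s <- f p.2 r.2] | p <- x, r <- y].

(* the letter z_{t,s} is the pair (t, s); it is a letter of Y_G iff t <= s *)
Definition YG_letter (a : nat * nat) : bool := (a.1 <= a.2)%N.

Definition A0_word (w : seq (nat * nat)) : bool :=
  match w with
  | [::] => false
  | a :: _ => (1 <= a.1)%N && all YG_letter w
  end.
Definition in_A0 (u : lc (nat * nat)) : bool := all (fun p => A0_word p.2) u.

Fixpoint stuffle_w (u v : seq (nat * nat)) {struct u} : lc (nat * nat) :=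
  match u with
  | [::] => [:: (1, v)]
  | a :: u' =>
      let fix stv (v0 : seq (nat * nat)) : lc (nat * nat) :=
        match v0 with
        | [::] => [:: (1, u)]
        | b :: v' =>
            lc_cons a (stuffle_w u' v0)
            ++ lc_cons b (stv v')
            ++ lc_cons (a.1 + b.1, a.2 + b.2)%N (stuffle_w u' v')
        end in
      stv v
  end.

Definition stuffle (x y : lc (nat * nat)) : lc (nat * nat) := lc_bil stuffle_w x y.

Inductive PY := Pi | Yl.

Fixpoint shuffle_w (u v : seq PY) {struct u} : lc PY :=
  match u with
  | [::] => [:: (1, v)]
  | a :: u' =>
      let fix shv (v0 : seq PY) : lc PY :=
        match v0 with
        | [::] => [:: (1, u)]
        | b :: v' =>
            match a, b with
            | Yl, _ => lc_cons Yl (shuffle_w u' v0)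
            | Pi, Yl => lc_cons Yl (shv v')
            | Pi, Pi =>
                lc_cons Pi (shuffle_w u' v0)
                ++ lc_cons Pi (shv v')
                ++ lc_scale (-1) (lc_cons Pi (shuffle_w u' v'))
            end
        end in
      shv v
  end.

Definition shuffle (x y : lc PY) : lc PY := lc_bil shuffle_w x y.

(* ---------- the homomorphism z_{t,s} |-> rho^t pi^(s-t) y, rho = pi - 1 ---------- *)
Definition lc_rho : lc PY := [:: (1, [:: Pi]); (-1, [::])].
Definition img_letter (a : nat * nat) : lc PY :=
  lc_mul (iter a.1 (lc_mul lc_rho) (lc_one PY))
         (lc_mul [:: (1, nseq (a.2 - a.1)%N Pi)] [:: (1, [:: Yl])]).
Definition img_word (w : seq (nat * nat)) : lc PY :=
  foldr (fun a acc => lc_mul (img_letter a) acc) (lc_one PY) w.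
Definition img (x : lc (nat * nat)) : lc PY :=
  flatten [seq lc_scale p.1 (img_word p.2) | p <- x].

Section Realization.
Variable R : realType.
Local Notation C := R[i].

(* formal power series in t are coefficient sequences nat -> C *)
(* P[f](t) = sum_k f(q^k t): on coefficients, t^n |-> t^n / (1 - q^n) *)
(* multiplication by t/(1-t): coefficient n becomes sum_{m<n} a_m *)
Definition Phi_letter (q : C) (l : PY) (a : nat -> C) : nat -> C :=
  match l with
  | Pi => fun n => a n / (1 - q ^+ n)
  | Yl => fun n => \sum_(m < n) a m
  end.

Definition Phi_word (q : C) (w : seq PY) (a : nat -> C) : nat -> C :=
  foldr (Phi_letter q) a w.

Definition ps_one : nat -> C := fun n => (n == 0%N)%:R.

Definition zq_coef (q : C) (W : lc PY) (n : nat) : C :=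
  \sum_(p <- W) ratr p.1 * Phi_word q p.2 ps_one n.

Definition series_sums_to (a : nat -> C) (l : C) : Prop :=
  forall e : R, 0 < e -> exists N : nat, forall n : nat, (N <= n)%N ->
    `| \sum_(k < n) a k - l | < (e%:C)%C.

(* z_q[W] = z : Phi(W)[1] evaluated at t = 1, i.e. the sum of its coefficients *)
Definition zq_is (q : C) (W : lc PY) (z : C) : Prop :=
  series_sums_to (zq_coef q W) z.

End Realization.

(* Under [Phi], the image of the letter z_{t,s} sends a coefficient sequence g to
   n |-> f_{t,s}(n) (g_0 + ... + g_{n-1}), where f_{t,s}(n) = q^(nt) / (1 - q^n)^s.
   Hence the partial sums S_w(N) of the coefficients of Phi(w)[1] satisfy
   S_{aw}(N+1) = S_{aw}(N) + f_a(N) S_w(N), and since f_{a+b} = f_a f_b this is the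
   recursion defining the stuffle: the stuffle identity holds for every truncation N.
   On Q<pi,y>, y acts as partial summation and pi as multiplication of the n-th
   coefficient by 1/(1 - q^n); the shuffle relations are then exactly those of the
   Cauchy product of sequences vanishing at 0, so the coefficients of Phi(u sh v)[1]
   are the convolution of those of Phi(u)[1] and Phi(v)[1].  As the first letter of
   a word of A^0_G has t >= 1, the coefficients decay like (|q| lam)^n for any
   lam > 1, so all series converge absolutely and the Cauchy product converges to
   the product of the sums. *)

From mathcomp Require Import all_boot all_order all_algebra.
From mathcomp Require Import reals complex classical_sets boolp.
From mathcomp Require Import ring lra zify.
Set Implicit Arguments.
Unset Strict Implicit.
Unset Printing Implicit Defensive.

Import Order.TTheory GRing.Theory Num.Theory.
Local Open Scope ring_scope.
Local Open Scope complex_scope.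

Section RealSequences.
Context {R : realType}.

Definition cvgR (s : nat -> R) (l : R) : Prop :=
  forall e : R, 0 < e -> exists N, forall n, (N <= n)%N -> `|s n - l| < e.

Lemma nondecreasing_bounded_cvgR (s : nat -> R) (B : R) :
  (forall n, s n <= s n.+1) -> (forall n, s n <= B) -> exists l, cvgR s l.
Proof.
move=> s_incr s_le_B.
have s_sup : has_sup (range s).
  by split; [exists (s 0%N), 0%N | exists B => _ [n _ <-]].
exists (sup (range s)) => e e_gt0.
have [_ [N _ <-] sN_gt] := sup_adherent e_gt0 s_sup.
exists N => n le_Nn.
have sn_le : s n <= sup (range s) by apply: sup_upper_bound => //; exists n.
have sN_le : s N <= s n.
  by apply: (homo_leq (r := fun x y : R => x <= y)) le_Nn => // y x z; exact: le_trans.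
rewrite ler0_norm ?subr_le0 //; lra.
Qed.

Lemma cvgRB (s t : nat -> R) (l m : R) :
  cvgR s l -> cvgR t m -> cvgR (fun n => s n - t n) (l - m).
Proof.
move=> sl tm e e_gt0.
have e2_gt0 : 0 < e / 2 by lra.
have [N1 hN1] := sl _ e2_gt0; have [N2 hN2] := tm _ e2_gt0.
exists (maxn N1 N2) => n; rewrite geq_max => /andP[/hN1 h1 /hN2 h2].
rewrite (_ : _ - _ = (s n - l) - (t n - m)); last by ring.
by apply: le_lt_trans (ler_normB _ _) _; lra.
Qed.

(* [x = (x + |x|) - |x|] splits the series into two nondecreasing ones. *)
Lemma abs_summable_cvgR (x : nat -> R) (B : R) :
  (forall N, \sum_(n < N) `|x n| <= B) ->
  exists l, cvgR (fun N => \sum_(n < N) x n) l.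
Proof.
move=> x_bound.
have [lP hP] : exists l, cvgR (fun N => \sum_(n < N) (x n + `|x n|)) l.
  apply: (@nondecreasing_bounded_cvgR _ (B + B)) => [n|N].
    rewrite big_ord_recr /= lerDl.
    by have := ler_norm (- x n); rewrite normrN; lra.
  rewrite big_split /=; apply: lerD (x_bound N).
  exact: le_trans (ler_norm _) (le_trans (ler_norm_sum _ _ _) (x_bound N)).
have [lQ hQ] : exists l, cvgR (fun N => \sum_(n < N) `|x n|) l.
  apply: (@nondecreasing_bounded_cvgR _ B) => // n.
  by rewrite big_ord_recr /= lerDl.
exists (lP - lQ) => e /(cvgRB hP hQ)[N hN]; exists N => n /hN.
by rewrite big_split /= addrK.
Qed.

Lemma bernoulli2 (d : R) (n : nat) : 0 <= d ->
  1 + n%:R * d + n%:R * (n%:R - 1) / 2 * d ^+ 2 <= (1 + d) ^+ n.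
Proof.
move=> d_ge0; elim: n => [|n IH]; first by rewrite expr0 !mul0r !addr0.
rewrite [X in _ <= X]exprS -natr1.
have n_ge0 : 0 <= (n%:R : R) * (n%:R - 1).
  by case: n {IH} => [|n]; rewrite ?mul0r // mulr_ge0 // -natr1 addrK.
have d3_ge0 : 0 <= (n%:R : R) * (n%:R - 1) * d ^+ 3 by rewrite mulr_ge0 ?exprn_ge0.
have d1_ge0 : 0 <= 1 + d by lra.
apply: le_trans (ler_wpM2l d1_ge0 IH).
move: n_ge0 d3_ge0; rewrite !exprS expr0 mulr1; nra.
Qed.

Lemma natr_mul_exprn_small (r : R) : 0 <= r -> r < 1 ->
  forall e : R, 0 < e -> exists N, forall n, (N <= n)%N -> n%:R * r ^+ n <= e.
Proof.
move=> r_ge0 r_lt1 e e_gt0.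
pose s := (1 + r) / 2; pose d := s^-1 - 1.
have s_gt0 : 0 < s by rewrite /s; lra.
have d_gt0 : 0 < d by rewrite /d subr_gt0 invf_gt1 // /s; lra.
have sd1 : s * (1 + d) = 1 by rewrite /d addrC subrK mulfV // gt_eqF.
have d2e_gt0 : 0 < d ^+ 2 * e by rewrite mulr_gt0 // exprn_gt0.
have [N N_gt] : exists N : nat, 2 / (d ^+ 2 * e) + 1 < N%:R.
  exists (Num.Def.archi_bound (2 / (d ^+ 2 * e) + 1)); apply: archi_boundP.
  by rewrite addr_ge0 // divr_ge0 // ltW.
exists N => n le_Nn.
pose X := (n%:R - 1) * d ^+ 2 / 2.
have Xe_gt1 : 1 < X * e.
  have : 2 / (d ^+ 2 * e) < n%:R - 1.
    by rewrite ltrBrDr; apply: lt_le_trans N_gt _; rewrite ler_nat.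
  by rewrite ltr_pdivrMr // /X; lra.
have X_gt0 : 0 < X by rewrite -(pmulr_lgt0 _ e_gt0); lra.
have sn_ge0 : 0 <= s ^+ n by rewrite exprn_ge0 // ltW.
have nsX_le1 : n%:R * s ^+ n * X <= 1.
  have := ler_wpM2l sn_ge0 (bernoulli2 n (ltW d_gt0)).
  rewrite -exprMn sd1 expr1n.
  have : 0 <= s ^+ n * (1 + n%:R * d) by rewrite mulr_ge0 // addr_ge0 // mulr_ge0 // ltW.
  rewrite /X; lra.
have rs : n%:R * r ^+ n <= n%:R * s ^+ n.
  by rewrite ler_wpM2l // lerXn2r // ?nnegrE ?ltW // /s; lra.
apply: le_trans rs _.
have : 0 <= n%:R * s ^+ n by rewrite mulr_ge0.
nra.
Qed.

Lemma sum_exprn_mulB1 (x : R) (n : nat) : (\sum_(m < n) x ^+ m) * (x - 1) <= x ^+ n.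
Proof. by rewrite mulrC -subrX1 lerBlDr lerDl. Qed.

Lemma sum_exprn_mul1B (x : R) (n : nat) : 0 <= x ->
  (\sum_(m < n) x ^+ m) * (1 - x) <= 1.
Proof.
move=> x_ge0; rewrite -opprB mulrN mulrC -subrX1 opprB lerBlDr lerDl.
exact: exprn_ge0.
Qed.

End RealSequences.

Section ComplexSeries.
Context {R : realType}.
Local Notation C := R[i].
Import Normc.

Lemma normr_normc (z : C) : `|z| = (normc z)%:C.
Proof. by case: z. Qed.

Lemma normc_ge0 (z : C) : 0 <= normc z.
Proof. by case: z => a b; exact: sqrtr_ge0. Qed.

Lemma normcX (z : C) (n : nat) : normc (z ^+ n) = normc z ^+ n.
Proof.
by elim: n => [|n IH]; rewrite ?expr0 ?normc1 // !exprS normcM IH.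
Qed.

Lemma normcB (x y : C) : normc (x - y) <= normc x + normc y.
Proof. by rewrite -(normcN y); exact: le_normcD. Qed.

Lemma normc_sum (I : Type) (s : seq I) (F : I -> C) :
  normc (\sum_(i <- s) F i) <= \sum_(i <- s) normc (F i).
Proof.
elim: s => [|i s IH]; first by rewrite !big_nil normc0.
by rewrite !big_cons (le_trans (le_normcD _ _)) // lerD2l.
Qed.

Lemma normc_Re (z : C) : `|complex.Re z| <= normc z.
Proof.
case: z => a b /=; rewrite -sqrtr_sqr ler_sqrt ?addr_ge0 ?sqr_ge0 //.
by rewrite lerDl sqr_ge0.
Qed.

Lemma normc_Im (z : C) : `|complex.Im z| <= normc z.
Proof.
case: z => a b /=; rewrite -sqrtr_sqr ler_sqrt ?addr_ge0 ?sqr_ge0 //.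
by rewrite lerDr sqr_ge0.
Qed.

Lemma normc_le_ReIm (z : C) : normc z <= `|complex.Re z| + `|complex.Im z|.
Proof.
case: z => a b /=.
have ab_ge0 : 0 <= `|a| + `|b| by rewrite addr_ge0.
rewrite -(ger0_norm ab_ge0) -sqrtr_sqr.
rewrite ler_sqrt ?sqr_ge0 // sqrrD.
rewrite -[a ^+ 2]real_normK ?num_real // -[b ^+ 2]real_normK ?num_real //.
by rewrite -addrA lerD2l lerDr mulrn_wge0 // mulr_ge0.
Qed.

Definition cvgC (s : nat -> C) (l : C) : Prop :=
  forall e : R, 0 < e -> exists N, forall n, (N <= n)%N -> normc (s n - l) < e.

Lemma series_sums_toP (a : nat -> C) (l : C) :
  series_sums_to a l <-> cvgC (fun n => \sum_(k < n) a k) l.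
Proof.
by split=> h e /h[N hN]; exists N => n /hN; rewrite normr_normc ltcR.
Qed.

Lemma abs_summable_sums (a : nat -> C) (B : R) :
  (forall N, \sum_(n < N) normc (a n) <= B) -> exists l, series_sums_to a l.
Proof.
move=> a_bound.
have [lRe hRe] : exists l, cvgR (fun N => \sum_(n < N) complex.Re (a n)) l.
  apply: (@abs_summable_cvgR _ (fun n => complex.Re (a n)) B) => N.
  by apply: le_trans (a_bound N); apply: ler_sum => n _; exact: normc_Re.
have [lIm hIm] : exists l, cvgR (fun N => \sum_(n < N) complex.Im (a n)) l.
  apply: (@abs_summable_cvgR _ (fun n => complex.Im (a n)) B) => N.
  by apply: le_trans (a_bound N); apply: ler_sum => n _; exact: normc_Im.
exists (lRe +i* lIm); apply/series_sums_toP => e e_gt0.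
have e2_gt0 : 0 < e / 2 by lra.
have [N1 hN1] := hRe _ e2_gt0; have [N2 hN2] := hIm _ e2_gt0.
exists (maxn N1 N2) => n; rewrite geq_max => /andP[/hN1 h1 /hN2 h2].
apply: le_lt_trans (normc_le_ReIm _) _.
have -> : \sum_(k < n) a k =
    (\sum_(k < n) complex.Re (a k)) +i* (\sum_(k < n) complex.Im (a k)).
  elim: n {h1 h2} => [|n IH]; first by rewrite !big_ord0.
  by rewrite !big_ord_recr IH; case: (a n).
rewrite /=; lra.
Qed.

End ComplexSeries.

Section CauchyProduct.
Context {R : realType}.
Local Notation C := R[i].
Import Normc.

Lemma cvgCM (s t : nat -> C) (l m : C) :
  cvgC s l -> cvgC t m -> cvgC (fun n => s n * t n) (l * m).
Proof.
move=> sl tm e e_gt0.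
have nl_ge0 := normc_ge0 l; have nm_ge0 := normc_ge0 m.
pose d := e / (2 * (normc l + normc m + 1)).
have d_gt0 : 0 < d by rewrite /d divr_gt0 //; lra.
have de : d * (normc l + normc m + 1) = e / 2 by rewrite /d; field; lra.
have md_gt0 : 0 < Num.min d 1 by rewrite lt_min d_gt0 ltr01.
have [N1 hN1] := sl _ md_gt0.
have [N2 hN2] := tm d d_gt0.
exists (maxn N1 N2) => n; rewrite geq_max => /andP[/hN1 h1 /hN2 h2].
move: h1; rewrite lt_min => /andP[h1d h11].
have -> : s n * t n - l * m = s n * (t n - m) + m * (s n - l) by ring.
apply: le_lt_trans (le_normcD _ _) _; rewrite !normcM.
have sn_le : normc (s n) <= normc l + 1.
  by have := le_normcD (s n - l) l; rewrite subrK; lra.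
have e1 : normc (s n) * normc (t n - m) <= (normc l + 1) * d.
  by apply: ler_pM; rewrite ?normc_ge0 //; lra.
have e2 : normc m * normc (s n - l) <= normc m * d.
  by apply: ler_wpM2l => //; lra.
lra.
Qed.

Lemma cvgC_sub_vanishing (s d : nat -> C) (l : C) : cvgC s l ->
  (forall e : R, 0 < e -> exists N, forall n, (N <= n)%N -> normc (d n) <= e) ->
  cvgC (fun n => s n - d n) l.
Proof.
move=> sl d0 e e_gt0.
have e2_gt0 : 0 < e / 2 by lra.
have [N1 hN1] := sl _ e2_gt0; have [N2 hN2] := d0 _ e2_gt0.
exists (maxn N1 N2) => n; rewrite geq_max => /andP[/hN1 h1 /hN2 h2].
have -> : s n - d n - l = (s n - l) - d n by ring.
by apply: le_lt_trans (normcB _ _) _; lra.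
Qed.

Definition conv (f g : nat -> C) (n : nat) : C := \sum_(i < n.+1) f i * g (n - i)%N.

Lemma sum_conv (f g : nat -> C) (N : nat) :
  \sum_(n < N) conv f g n = \sum_(i < N) f i * \sum_(j < N - i) g j.
Proof.
elim: N => [|N IH]; first by rewrite !big_ord0.
rewrite big_ord_recr /= IH [RHS]big_ord_recr /= subSnn big_ord1.
rewrite /conv big_ord_recr /= subnn.
under [in RHS]eq_bigr => i _.
  by rewrite (subSn (ltnW (ltn_ord i))) big_ord_recr /= mulrDr; over.
by rewrite big_split /= !addrA.
Qed.

Lemma sum_mul_sub_sum_conv (f g : nat -> C) (N : nat) :
  (\sum_(n < N) f n) * (\sum_(n < N) g n) - \sum_(n < N) conv f g n =
  \sum_(i < N) f i * (\sum_(n < N) g n - \sum_(j < N - i) g j).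
Proof.
by rewrite sum_conv mulr_suml -sumrB; apply: eq_bigr => i _; rewrite mulrBr.
Qed.

Lemma convC (f g : nat -> C) : conv f g = conv g f.
Proof.
apply: funext => n; rewrite /conv (reindex_inj rev_ord_inj) /=.
apply: eq_bigr => i _; rewrite subSS subKn 1?mulrC //.
by rewrite -ltnS.
Qed.

Lemma conv1f (f : nat -> C) : conv (ps_one R) f = f.
Proof.
apply: funext => n; rewrite /conv big_ord_recl subn0 mul1r big1 ?addr0 // => i _.
by rewrite mul0r.
Qed.

Lemma convf1 (f : nat -> C) : conv f (ps_one R) = f.
Proof. by rewrite convC conv1f. Qed.

Lemma conv_psuml (f g : nat -> C) (n : nat) :
  conv (fun k => \sum_(m < k) f m) g n = \sum_(m < n) conv f g m.
Proof.
rewrite convC {1}/conv big_ord_recr /= subnn big_ord0 mulr0 addr0 -sum_conv.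
by apply: eq_bigr => m _; rewrite convC.
Qed.

Lemma conv_suml (I J : Type) (s : seq I) (t : seq J) (c : I -> C) (d : J -> C)
    (F : I -> nat -> C) (G : J -> nat -> C) (n : nat) :
  conv (fun m => \sum_(i <- s) c i * F i m) (fun m => \sum_(j <- t) d j * G j m) n =
  \sum_(i <- s) \sum_(j <- t) c i * d j * conv (F i) (G j) n.
Proof.
rewrite /conv.
under eq_bigr do rewrite mulr_suml; rewrite exchange_big; apply: eq_bigr => i _.
under eq_bigr do rewrite mulr_sumr; rewrite exchange_big; apply: eq_bigr => j _.
by rewrite mulr_sumr; apply: eq_bigr => k _; rewrite mulrACA.
Qed.

Variable rho : R.
Hypotheses (rho_ge0 : 0 <= rho) (rho_lt1 : rho < 1).

Lemma geometric_bound_ge0 (a : nat -> C) (K : R) :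
  (forall n, normc (a n) <= K * rho ^+ n) -> 0 <= K.
Proof.
by move/(_ 0%N); rewrite expr0 mulr1; exact: le_trans (normc_ge0 _).
Qed.

Lemma geometric_bound_sums (a : nat -> C) (K : R) :
  (forall n, normc (a n) <= K * rho ^+ n) -> exists l, series_sums_to a l.
Proof.
move=> a_bound; have K_ge0 := geometric_bound_ge0 a_bound.
apply: (abs_summable_sums (B := K / (1 - rho))) => N.
apply: (@le_trans _ _ (\sum_(n < N) K * rho ^+ n)); first by apply: ler_sum.
rewrite -mulr_sumr ler_wpM2l // -[_^-1]mul1r ler_pdivlMr ?subr_gt0 //.
exact: sum_exprn_mul1B.
Qed.

Lemma geometric_bound_tail (b : nat -> C) (K : R) (M N : nat) :
  (forall n, normc (b n) <= K * rho ^+ n) -> (M <= N)%N ->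
  normc (\sum_(n < N) b n - \sum_(n < M) b n) <= K * rho ^+ M / (1 - rho).
Proof.
move=> b_bound le_MN; have K_ge0 := geometric_bound_ge0 b_bound.
rewrite -!(big_mkord xpredT) (big_cat_nat (leq0n M) le_MN) /= addrAC subrr add0r.
apply: le_trans (normc_sum _ _) _.
apply: (@le_trans _ _ (\sum_(M <= n < N) K * rho ^+ n)); first by apply: ler_sum.
rewrite -{1}(add0n M) big_addn big_mkord.
under eq_bigr do rewrite exprD mulrA mulrAC.
rewrite -mulr_sumr ler_pdivlMr ?subr_gt0 //.
rewrite -mulrA -[X in _ <= X]mulr1 ler_wpM2l ?mulr_ge0 ?exprn_ge0 //.
exact: sum_exprn_mul1B.
Qed.

Lemma cauchy_product_sums (a b : nat -> C) (A B : R) (la lb : C) :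
  (forall n, normc (a n) <= A * rho ^+ n) -> (forall n, normc (b n) <= B * rho ^+ n) ->
  series_sums_to a la -> series_sums_to b lb -> series_sums_to (conv a b) (la * lb).
Proof.
move=> a_bound b_bound /series_sums_toP hla /series_sums_toP hlb.
have A_ge0 := geometric_bound_ge0 a_bound; have B_ge0 := geometric_bound_ge0 b_bound.
pose D N := (\sum_(n < N) a n) * (\sum_(n < N) b n) - \sum_(n < N) conv a b n.
pose c := A * B / (1 - rho).
have c_ge0 : 0 <= c by rewrite divr_ge0 ?mulr_ge0 // subr_ge0 ltW.
have D_le N : normc (D N) <= N%:R * rho ^+ N * c.
  rewrite /D sum_mul_sub_sum_conv.
  apply: le_trans (normc_sum _ _) _.
  rewrite -mulrA mulr_natl -[N in _ *+ N]card_ord -sumr_const; apply: ler_sum => i _.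
  rewrite normcM (_ : rho ^+ N * c = (A * rho ^+ i) * (B * rho ^+ (N - i) / (1 - rho))).
    apply: ler_pM; rewrite ?normc_ge0 //.
    exact: geometric_bound_tail (leq_subr _ _).
  by rewrite -[in LHS](subnKC (ltnW (ltn_ord i))) exprD /c; ring.
have D_small e : 0 < e -> exists N, forall n, (N <= n)%N -> normc (D n) <= e.
  move=> e_gt0; have ec_gt0 : 0 < e / (c + 1) by rewrite divr_gt0 //; lra.
  have [N hN] := natr_mul_exprn_small rho_ge0 rho_lt1 ec_gt0.
  exists N => n /hN nrn_le; apply: le_trans (D_le n) _.
  apply: le_trans (ler_wpM2r c_ge0 nrn_le) _.
  rewrite mulrAC ler_pdivrMr ?ler_wpM2l; lra.
apply/series_sums_toP; have := cvgC_sub_vanishing (cvgCM hla hlb) D_small.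
by congr cvgC; apply: funext => N; rewrite /D opprB addrC subrK.
Qed.

End CauchyProduct.

Section Realization.
Context {R : realType} (q : R[i]).
Local Notation C := R[i].

Definition lc_act (x : lc PY) (g : nat -> C) (n : nat) : C :=
  \sum_(p <- x) ratr p.1 * Phi_word q p.2 g n.

Lemma Phi_word_cat (w1 w2 : seq PY) (g : nat -> C) :
  Phi_word q (w1 ++ w2) g = Phi_word q w1 (Phi_word q w2 g).
Proof. by rewrite /Phi_word foldr_cat. Qed.

Lemma Phi_letter_sum (l : PY) (I : Type) (s : seq I) (c : I -> C) (F : I -> nat -> C) n :
  Phi_letter q l (fun m => \sum_(i <- s) c i * F i m) n =
  \sum_(i <- s) c i * Phi_letter q l (F i) n.
Proof.
case: l => /=; first by rewrite mulr_suml; apply: eq_bigr => i _; rewrite mulrA.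
by rewrite exchange_big; apply: eq_bigr => i _; rewrite mulr_sumr.
Qed.

Lemma Phi_word_sum (w : seq PY) (I : Type) (s : seq I) (c : I -> C) (F : I -> nat -> C) n :
  Phi_word q w (fun m => \sum_(i <- s) c i * F i m) n =
  \sum_(i <- s) c i * Phi_word q w (F i) n.
Proof.
elim: w n => [|l w IH] n //=.
by rewrite -Phi_letter_sum; congr Phi_letter; apply: funext.
Qed.

Lemma lc_act_cat (x y : lc PY) g n : lc_act (x ++ y) g n = lc_act x g n + lc_act y g n.
Proof. by rewrite /lc_act big_cat. Qed.

Lemma lc_act_seq1 (c : rat) (w : seq PY) g n :
  lc_act [:: (c, w)] g n = ratr c * Phi_word q w g n.
Proof. by rewrite /lc_act big_seq1. Qed.

Lemma lc_act_cons (l : PY) (x : lc PY) g :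
  lc_act (lc_cons l x) g = Phi_letter q l (lc_act x g).
Proof. by apply: funext => n; rewrite /lc_act big_map Phi_letter_sum. Qed.

Lemma lc_act_scale (c : rat) (x : lc PY) g n :
  lc_act (lc_scale c x) g n = ratr c * lc_act x g n.
Proof.
rewrite /lc_act big_map mulr_sumr; apply: eq_bigr => p _.
by rewrite rmorphM mulrA.
Qed.

Lemma lc_act_one g n : lc_act (lc_one PY) g n = g n.
Proof. by rewrite lc_act_seq1 rmorph1 mul1r. Qed.

Lemma lc_act_mul (x y : lc PY) g n : lc_act (lc_mul x y) g n = lc_act x (lc_act y g) n.
Proof.
rewrite /lc_act /lc_mul big_allpairs_dep; apply: eq_bigr => p _.
rewrite Phi_word_sum mulr_sumr; apply: eq_bigr => r _.
by rewrite Phi_word_cat rmorphM !mulrA.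
Qed.

Lemma lc_act_bil (f : seq PY -> seq PY -> lc PY) (x y : lc PY) g n :
  lc_act (lc_bil f x y) g n =
  \sum_(p <- x) \sum_(r <- y) ratr p.1 * ratr r.1 * lc_act (f p.2 r.2) g n.
Proof.
rewrite /lc_bil /lc_act big_flatten big_allpairs_dep; apply: eq_bigr => p _.
apply: eq_bigr => r _; rewrite big_map mulr_sumr; apply: eq_bigr => s _.
by rewrite !rmorphM !mulrA.
Qed.

Definition pi_q (n : nat) : C := (1 - q ^+ n)^-1.
Definition rho_q (n : nat) : C := pi_q n - 1.

(* [rho_q n = q^n / (1 - q^n)], so [letter_coef (t, s) n = q^(n t) / (1 - q^n)^s]. *)
Definition letter_coef (a : nat * nat) (n : nat) : C :=
  rho_q n ^+ a.1 * pi_q n ^+ (a.2 - a.1).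

Lemma lc_act_img_letter (a : nat * nat) g n :
  lc_act (img_letter a) g n = letter_coef a n * \sum_(m < n) g m.
Proof.
have act_rho h k : lc_act lc_rho h k = rho_q k * h k.
  rewrite /lc_act !big_cons big_nil /= rmorph1 rmorphN1 mul1r mulN1r addr0.
  by rewrite /rho_q mulrBl mul1r mulrC.
have act_rhoX t h k : lc_act (iter t (lc_mul lc_rho) (lc_one PY)) h k = rho_q k ^+ t * h k.
  elim: t h k => [|t IH] h k; first by rewrite lc_act_one mul1r.
  by rewrite iterS lc_act_mul act_rho IH exprS mulrA.
have Phi_piX t h k : Phi_word q (nseq t Pi) h k = pi_q k ^+ t * h k.
  elim: t k => [|t IH] k; first by rewrite mul1r.
  by rewrite /= -/(Phi_word q (nseq t Pi) h) IH exprS /pi_q mulrC mulrA.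
rewrite /img_letter !lc_act_mul act_rhoX lc_act_seq1 /= Phi_word_cat Phi_piX.
by rewrite mulr1 rmorph1 mul1r /letter_coef mulrA.
Qed.

Lemma letter_coefD (a b : nat * nat) n : YG_letter a -> YG_letter b ->
  letter_coef (a.1 + b.1, a.2 + b.2)%N n = letter_coef a n * letter_coef b n.
Proof.
rewrite /YG_letter /letter_coef /= => ha hb.
have -> : (a.2 + b.2 - (a.1 + b.1) = (a.2 - a.1) + (b.2 - b.1))%N by lia.
by rewrite !exprD; ring.
Qed.

Definition word_coef (w : seq (nat * nat)) (n : nat) : C :=
  lc_act (img_word w) (ps_one R) n.

Definition word_psum (w : seq (nat * nat)) (N : nat) : C := \sum_(n < N) word_coef w n.

Lemma word_coef_nil : word_coef [::] = ps_one R.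
Proof. by apply: funext => n; exact: lc_act_one. Qed.

Lemma word_coef_cons (a : nat * nat) (w : seq (nat * nat)) n :
  word_coef (a :: w) n = letter_coef a n * word_psum w n.
Proof. by rewrite /word_coef /= lc_act_mul lc_act_img_letter. Qed.

Lemma word_psum0 (w : seq (nat * nat)) : word_psum w 0 = 0.
Proof. by rewrite /word_psum big_ord0. Qed.

Lemma word_psum_nil N : word_psum [::] N.+1 = 1.
Proof.
by rewrite /word_psum word_coef_nil big_ord_recl big1 ?addr0.
Qed.

Lemma word_psum_consS (a : nat * nat) (w : seq (nat * nat)) N :
  word_psum (a :: w) N.+1 = word_psum (a :: w) N + letter_coef a N * word_psum w N.
Proof. by rewrite /word_psum big_ord_recr /= word_coef_cons. Qed.

Lemma zq_coef_img (x : lc (nat * nat)) n :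
  zq_coef q (img x) n = \sum_(p <- x) ratr p.1 * word_coef p.2 n.
Proof.
rewrite /zq_coef /img big_flatten big_map; apply: eq_bigr => p _.
by rewrite -lc_act_scale.
Qed.

End Realization.

Section StuffleTruncated.
Context {R : realType} (q : R[i]).
Local Notation C := R[i].
Local Notation word_psum := (word_psum q).
Local Notation letter_coef := (letter_coef q).

Definition lc_psum (N : nat) (x : lc (nat * nat)) : C :=
  \sum_(p <- x) ratr p.1 * word_psum p.2 N.

Lemma sum_zq_coef_img (x : lc (nat * nat)) (N : nat) :
  \sum_(n < N) zq_coef q (img x) n = lc_psum N x.
Proof.
under eq_bigr do rewrite zq_coef_img.
by rewrite exchange_big; apply: eq_bigr => p _; rewrite mulr_sumr.
Qed.

Lemma lc_psum_cat N (x y : lc (nat * nat)) : lc_psum N (x ++ y) = lc_psum N x + lc_psum N y.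
Proof. by rewrite /lc_psum big_cat. Qed.

Lemma lc_psum_word N (w : seq (nat * nat)) : lc_psum N [:: (1, w)] = word_psum w N.
Proof. by rewrite /lc_psum big_seq1 rmorph1 mul1r. Qed.

Lemma lc_psum_consS N (a : nat * nat) (x : lc (nat * nat)) :
  lc_psum N.+1 (lc_cons a x) = lc_psum N (lc_cons a x) + letter_coef a N * lc_psum N x.
Proof.
rewrite /lc_psum /lc_cons !big_map mulr_sumr -big_split; apply: eq_bigr => p _ /=.
by rewrite word_psum_consS mulrDr mulrCA.
Qed.

(* By [word_psum_consS] and [letter_coefD], the product of partial sums obeys the
   recursion defining the stuffle. *)
Lemma lc_psum_stuffle_w N (u v : seq (nat * nat)) : all YG_letter u -> all YG_letter v ->
  lc_psum N (stuffle_w u v) = word_psum u N * word_psum v N.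
Proof.
elim: N u v => [|N IH] u v hu hv.
  by rewrite /lc_psum !word_psum0 mulr0 big1 // => p _; rewrite word_psum0 mulr0.
case: u hu => [|a u] au; first by rewrite lc_psum_word word_psum_nil mul1r.
case: v hv => [|b v] bv; first by rewrite lc_psum_word word_psum_nil mulr1.
have IH0 := IH _ _ au bv.
have /andP[ha hu] := au; have /andP[hb hv] := bv.
have IHu := IH _ _ hu bv; have IHv := IH _ _ au hv; have IHuv := IH _ _ hu hv.
rewrite /= !lc_psum_cat in IH0 *.
rewrite !lc_psum_consS IHu IHv IHuv !word_psum_consS letter_coefD //.
set X := lc_psum N (lc_cons a _) in IH0 *.
set Y := lc_psum N (lc_cons b _) in IH0 *.
set Z := lc_psum N (lc_cons _ _) in IH0 *.
have -> : X = word_psum (a :: u) N * word_psum (b :: v) N - Y - Z by rewrite -IH0; ring.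
ring.
Qed.

Lemma lc_psum_stuffle N (x y : lc (nat * nat)) :
  all (fun p => all YG_letter p.2) x -> all (fun p => all YG_letter p.2) y ->
  lc_psum N (stuffle x y) = lc_psum N x * lc_psum N y.
Proof.
move=> /allP hx /allP hy.
rewrite /stuffle /lc_bil /lc_psum big_flatten big_allpairs_dep big_distrl /=.
apply: eq_big_seq => p px; rewrite big_distrr /=; apply: eq_big_seq => r ry.
rewrite big_map mulrACA -/(lc_psum N (stuffle_w p.2 r.2)).
rewrite -(lc_psum_stuffle_w _ (hx _ px) (hy _ ry)) /lc_psum mulr_sumr.
by apply: eq_bigr => s _; rewrite !rmorphM !mulrA.
Qed.

Lemma sum_zq_coef_stuffle (x y : lc (nat * nat)) :
  all (fun p => all YG_letter p.2) x -> all (fun p => all YG_letter p.2) y ->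
  forall N, \sum_(n < N) zq_coef q (img (stuffle x y)) n =
            (\sum_(n < N) zq_coef q (img x) n) * \sum_(n < N) zq_coef q (img y) n.
Proof. by move=> hx hy N; rewrite !sum_zq_coef_img lc_psum_stuffle. Qed.

End StuffleTruncated.

Lemma in_A0_YG (x : lc (nat * nat)) : in_A0 x -> all (fun p => all YG_letter p.2) x.
Proof. by apply: sub_all => -[c [|a w]] //= /andP[]. Qed.

Section ShuffleConvolution.
Context {R : realType} (q : R[i]).
Local Notation C := R[i].
Hypothesis q_regular : forall m, (0 < m)%N -> 1 - q ^+ m != 0.

Local Notation Phi1 w := (Phi_word q w (ps_one R)).

Lemma conv_Phi_y (f g : nat -> C) : conv (Phi_letter q Yl f) g = Phi_letter q Yl (conv f g).
Proof. by apply: funext => n; exact: conv_psuml. Qed.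

Lemma pi_qD (i j : nat) : (0 < i)%N -> (0 < j)%N ->
  pi_q q i * pi_q q j = pi_q q (i + j) * (pi_q q i + pi_q q j - 1).
Proof.
move=> i_gt0 j_gt0; have := q_regular (ltn_addr j i_gt0).
move: (q_regular i_gt0) (q_regular j_gt0); rewrite /pi_q exprD.
by move=> qi qj qij; field; rewrite qi qj qij.
Qed.

Lemma conv_Phi_pi (f g : nat -> C) n : f 0%N = 0 -> g 0%N = 0 ->
  conv (Phi_letter q Pi f) (Phi_letter q Pi g) n =
  Phi_letter q Pi (conv f (Phi_letter q Pi g)) n
  + Phi_letter q Pi (conv (Phi_letter q Pi f) g) n - Phi_letter q Pi (conv f g) n.
Proof.
move=> f0 g0 /=; rewrite /conv !mulr_suml -big_split -sumrB /=.
apply: eq_bigr => i _; have i_le_n : (i <= n)%N by rewrite -ltnS ltn_ord.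
have [->|i_gt0] := posnP i; first by rewrite f0 !(mul0r, add0r, subrr).
have [i_eqn|i_ltn] := eqVneq (nat_of_ord i) n.
  by rewrite i_eqn subnn g0 !(mulr0, mul0r, addr0, subrr).
have ni_gt0 : (0 < n - i)%N by rewrite subn_gt0 ltn_neqAle i_ltn.
have := pi_qD i_gt0 ni_gt0; rewrite subnKC // /pi_q => pi_ij.
transitivity (f i * g (n - i)%N * ((1 - q ^+ i)^-1 * (1 - q ^+ (n - i))^-1)).
  by ring.
by rewrite pi_ij; ring.
Qed.

Definition ends_in_y (w : seq PY) : bool := if last Yl w is Yl then true else false.

Lemma ends_in_y_behead (a : PY) (w : seq PY) : ends_in_y (a :: w) -> ends_in_y w.
Proof. by case: w. Qed.

Lemma Phi_word_ends_in_y0 (a : PY) (w : seq PY) :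
  ends_in_y (a :: w) -> Phi1 (a :: w) 0%N = 0.
Proof.
elim: w a => [|b w IH] [] //=; rewrite ?big_ord0 // => /IH /= ->.
by rewrite mul0r.
Qed.

Lemma shuffle_w_y_l (u : seq PY) (b : PY) (v : seq PY) :
  shuffle_w (Yl :: u) (b :: v) = lc_cons Yl (shuffle_w u (b :: v)).
Proof. by []. Qed.

Lemma shuffle_w_pi_y (u v : seq PY) :
  shuffle_w (Pi :: u) (Yl :: v) = lc_cons Yl (shuffle_w (Pi :: u) v).
Proof. by []. Qed.

Lemma shuffle_w_pi_pi (u v : seq PY) :
  shuffle_w (Pi :: u) (Pi :: v) =
  lc_cons Pi (shuffle_w u (Pi :: v)) ++ lc_cons Pi (shuffle_w (Pi :: u) v)
  ++ lc_scale (-1) (lc_cons Pi (shuffle_w u v)).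
Proof. by []. Qed.

Lemma shuffle_w_conv (u v : seq PY) : ends_in_y u -> ends_in_y v ->
  lc_act q (shuffle_w u v) (ps_one R) = conv (Phi1 u) (Phi1 v).
Proof.
elim: u v => [|a u IHu] v yu yv.
  by rewrite conv1f; apply: funext => n; rewrite lc_act_seq1 rmorph1 mul1r.
elim: v yv => [|b v IHv] yv.
  by rewrite [Phi1 [::]]/= convf1; apply: funext => n; rewrite lc_act_seq1 rmorph1 mul1r.
have yu' := ends_in_y_behead yu; have yv' := ends_in_y_behead yv.
case: a yu IHu IHv => yu IHu IHv; last first.
  by rewrite shuffle_w_y_l lc_act_cons IHu // -conv_Phi_y.
case: b yv IHv => yv IHv; last first.
  by rewrite shuffle_w_pi_y lc_act_cons IHv // convC -conv_Phi_y convC.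
rewrite shuffle_w_pi_pi; apply: funext => n.
rewrite !lc_act_cat !lc_act_cons lc_act_scale lc_act_cons IHu // IHv // IHu //.
rewrite rmorphN1 mulN1r addrA.
case: u yu yu' {IHu IHv} => [|c u] // yu yu'.
case: v yv yv' => [|d v] // yv yv'.
by rewrite [RHS]conv_Phi_pi //; apply: Phi_word_ends_in_y0.
Qed.

Lemma ends_in_y_cat (u v : seq PY) : ends_in_y u -> ends_in_y v -> ends_in_y (u ++ v).
Proof. by rewrite /ends_in_y last_cat; case: v => [|b v] //=; case: (last Yl u). Qed.

Lemma ends_in_y_cat_nonempty (u v : seq PY) :
  (0 < size v)%N -> ends_in_y v -> ends_in_y (u ++ v).
Proof. by rewrite /ends_in_y last_cat; case: v. Qed.

Lemma all_lc_mul (A : Type) (P1 P2 P : seq A -> bool) (x y : lc A) :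
  (forall u v, P1 u -> P2 v -> P (u ++ v)) ->
  all (fun p => P1 p.2) x -> all (fun p => P2 p.2) y -> all (fun p => P p.2) (lc_mul x y).
Proof.
move=> P12; elim: x => [|p x IH] //= /andP[p1 x1] y2.
rewrite all_cat IH // andbT all_map.
by apply: sub_all y2 => r /= r2; apply: P12.
Qed.

Lemma ends_in_y_img (x : lc (nat * nat)) : all (fun p => ends_in_y p.2) (img x).
Proof.
have img_word_y w : all (fun p => ends_in_y p.2) (img_word w).
  elim: w => [|a w IH] //=; apply: (all_lc_mul ends_in_y_cat) IH.
  apply: (@all_lc_mul _ predT (fun v => (0 < size v)%N && ends_in_y v)).
  - by move=> u v _ /andP[]; exact: ends_in_y_cat_nonempty.
  - by elim: (iter _ _ _).
  by rewrite /= size_cat addnS /ends_in_y last_cat.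
elim: x => [|p x IH] //; rewrite /img /= all_cat -/(img x) IH andbT all_map.
exact: sub_all (img_word_y p.2).
Qed.

Lemma eq_bigr_all (T : Type) (P : pred T) (s : seq T) (F1 F2 : T -> C) :
  all P s -> (forall x, P x -> F1 x = F2 x) -> \sum_(x <- s) F1 x = \sum_(x <- s) F2 x.
Proof.
move=> Ps eqF; elim: s Ps => [|x s IH]; rewrite ?big_nil // !big_cons /=.
by case/andP=> /eqF-> /IH->.
Qed.

Lemma zq_coef_shuffle (x y : lc (nat * nat)) n :
  zq_coef q (shuffle (img x) (img y)) n = conv (zq_coef q (img x)) (zq_coef q (img y)) n.
Proof.
rewrite [LHS]lc_act_bil /zq_coef conv_suml.
apply: (eq_bigr_all (ends_in_y_img x)) => p yp.
apply: (eq_bigr_all (ends_in_y_img y)) => r yr.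
by rewrite shuffle_w_conv.
Qed.

End ShuffleConvolution.

Section Estimates.
Context {R : realType} (q : R[i]).
Hypothesis q_lt1 : `|q| < 1.
Local Notation C := R[i].
Import Normc.
Local Notation r := (normc q).

Lemma normc_q_lt1 : r < 1.
Proof. by rewrite -ltcR -normr_normc. Qed.

Lemma normc_1_sub_qX (m : nat) : (0 < m)%N -> 1 - r <= normc (1 - q ^+ m).
Proof.
move=> m_gt0; have := le_normcD (1 - q ^+ m) (q ^+ m); rewrite subrK normc1 normcX.
have : r ^+ m <= r by rewrite -[leRHS]expr1 ler_wiXn2l ?normc_ge0 ?ltW ?normc_q_lt1.
lra.
Qed.

Lemma one_sub_qX_neq0 (m : nat) : (0 < m)%N -> 1 - q ^+ m != 0.
Proof.
move=> /normc_1_sub_qX; apply: contraTneq => ->; rewrite normc0.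
by have := normc_q_lt1; lra.
Qed.

Local Notation K := (1 - r)^-1.

Lemma invr1B_normc_ge0 : 0 <= K.
Proof. by rewrite invr_ge0 subr_ge0 ltW ?normc_q_lt1. Qed.

Lemma normc_pi_q (m : nat) : (0 < m)%N -> normc (pi_q q m) <= K.
Proof.
move=> m_gt0; have r1_gt0 : 0 < 1 - r by have := normc_q_lt1; lra.
rewrite normcV lef_pV2 ?posrE ?normc_1_sub_qX //.
exact: lt_le_trans r1_gt0 (normc_1_sub_qX m_gt0).
Qed.

Lemma normc_rho_q (m : nat) : (0 < m)%N -> normc (rho_q q m) <= r ^+ m * K.
Proof.
move=> m_gt0; have qm_neq0 := one_sub_qX_neq0 m_gt0.
have -> : rho_q q m = q ^+ m * pi_q q m by rewrite /rho_q /pi_q; field.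
by rewrite normcM normcX ler_wpM2l ?exprn_ge0 ?normc_ge0 ?normc_pi_q.
Qed.

Lemma normc_letter_coef (a : nat * nat) (m : nat) : (0 < m)%N ->
  normc (letter_coef q a m) <= (r ^+ m) ^+ a.1 * K ^+ (a.1 + (a.2 - a.1)).
Proof.
move=> m_gt0; have K_ge0 := invr1B_normc_ge0.
rewrite /letter_coef normcM !normcX exprD mulrA -exprMn.
apply: ler_pM; rewrite ?exprn_ge0 ?normc_ge0 //.
  apply: lerXn2r; rewrite ?nnegrE ?(normc_ge0, mulr_ge0, exprn_ge0, normc_rho_q) //.
by apply: lerXn2r; rewrite ?nnegrE ?normc_ge0 ?normc_pi_q.
Qed.

Lemma normc_word_coef_cons (a : nat * nat) (w : seq (nat * nat)) (m : nat) :
  normc (word_coef q (a :: w) m) <=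
  (r ^+ m) ^+ a.1 * K ^+ (a.1 + (a.2 - a.1)) * \sum_(k < m) normc (word_coef q w k).
Proof.
rewrite word_coef_cons normcM; case: m => [|m].
  by rewrite word_psum0 big_ord0 normc0 !mulr0.
apply: ler_pM; rewrite ?normc_ge0 ?normc_letter_coef //.
exact: normc_sum.
Qed.

Lemma word_coef_sum_bound (lam : R) (w : seq (nat * nat)) : 1 < lam ->
  exists M, forall n, \sum_(m < n) normc (word_coef q w m) <= M * lam ^+ n.
Proof.
move=> lam_gt1; elim: w => [|a w [M w_bound]].
  exists 1 => n; rewrite mul1r word_coef_nil.
  apply: le_trans (exprn_ege1 _ (ltW lam_gt1)); case: n => [|n]; first by rewrite big_ord0.
  by rewrite big_ord_recl big1 ?normc1 ?addr0 // => i _; rewrite normc0.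
have M_ge0 : 0 <= M by have := w_bound 0%N; rewrite big_ord0 expr0 mulr1.
pose Ka := K ^+ (a.1 + (a.2 - a.1)).
have Ka_ge0 : 0 <= Ka := exprn_ge0 _ invr1B_normc_ge0.
have term m : normc (word_coef q (a :: w) m) <= Ka * M * lam ^+ m.
  have rt_le1 : (r ^+ m) ^+ a.1 <= 1.
    by rewrite !exprn_ile1 ?exprn_ge0 ?normc_ge0 ?ltW ?normc_q_lt1.
  apply: le_trans (normc_word_coef_cons a w m) _; rewrite -[leRHS]mulrA.
  apply: ler_pM; last exact: w_bound.
  - exact: mulr_ge0 (exprn_ge0 _ (exprn_ge0 _ (normc_ge0 q))) Ka_ge0.
  - by apply: sumr_ge0 => i _; exact: normc_ge0.
  - by rewrite -[leRHS]mul1r ler_wpM2r.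
exists (Ka * M / (lam - 1)) => n.
apply: (@le_trans _ _ (\sum_(m < n) Ka * M * lam ^+ m)); first by apply: ler_sum.
rewrite -mulr_sumr [leRHS]mulrAC -[leRHS]mulrA ler_wpM2l ?mulr_ge0 //.
rewrite ler_pdivlMr ?subr_gt0 //.
exact: sum_exprn_mulB1.
Qed.

Lemma normc_word_coef_A0 (lam : R) (w : seq (nat * nat)) : 1 < lam -> A0_word w ->
  exists K0, forall m, normc (word_coef q w m) <= K0 * (r * lam) ^+ m.
Proof.
case: w => [|a w] //= lam_gt1 /andP[t_ge1 _].
have [M w_bound] := word_coef_sum_bound w lam_gt1.
have Ka_ge0 : 0 <= K ^+ (a.1 + (a.2 - a.1)) := exprn_ge0 _ invr1B_normc_ge0.
exists (K ^+ (a.1 + (a.2 - a.1)) * M) => m.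
apply: le_trans (normc_word_coef_cons a w m) _.
rewrite exprMn [leRHS]mulrACA [K ^+ _ * r ^+ m]mulrC.
have rm_ge0 : 0 <= r ^+ m := exprn_ge0 _ (normc_ge0 q).
apply: ler_pM; last exact: w_bound.
- exact: mulr_ge0 (exprn_ge0 _ rm_ge0) Ka_ge0.
- by apply: sumr_ge0 => i _; exact: normc_ge0.
rewrite ler_wpM2r // -[leRHS]expr1 ler_wiXn2l //.
by rewrite exprn_ile1 ?normc_ge0 // ltW ?normc_q_lt1.
Qed.

Lemma zq_coef_img_bound (lam : R) (x : lc (nat * nat)) : 1 < lam -> in_A0 x ->
  exists Kx, forall m, normc (zq_coef q (img x) m) <= Kx * (r * lam) ^+ m.
Proof.
move=> lam_gt1; elim: x => [|p x IH] /=.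
  by exists 0 => m; rewrite zq_coef_img big_nil normc0 mul0r.
case/andP=> /(normc_word_coef_A0 lam_gt1)[Kp p_bound] /IH[Kx x_bound].
exists (normc (ratr p.1) * Kp + Kx) => m.
rewrite zq_coef_img big_cons -zq_coef_img mulrDl.
apply: le_trans (le_normcD _ _) (lerD _ (x_bound m)).
by rewrite normcM -mulrA ler_wpM2l ?normc_ge0.
Qed.

Lemma geometric_rate_exists : exists2 lam : R, 1 < lam & 0 <= r * lam < 1.
Proof.
have := normc_q_lt1; have := normc_ge0 q => r_ge0 r_lt1.
exists ((3 - r) / 2); first lra.
by apply/andP; split; [rewrite mulr_ge0 //; lra | nra].
Qed.

End Estimates.

Local Close Scope complex_scope.

Theorem theorem9p2 (R : realType) (q : R[i]) (hq : `|q| < 1)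
    (u v : lc (nat * nat)) (hu : in_A0 u) (hv : in_A0 v) :
  exists zu zv : R[i],
    [/\ zq_is q (img u) zu,
        zq_is q (img v) zv,
        zq_is q (img (stuffle u v)) (zu * zv)
      & zq_is q (shuffle (img u) (img v)) (zu * zv)].
Proof.
have [lam lam_gt1 /andP[rho_ge0 rho_lt1]] := geometric_rate_exists hq.
have [Ku u_bound] := zq_coef_img_bound hq lam_gt1 hu.
have [Kv v_bound] := zq_coef_img_bound hq lam_gt1 hv.
have [zu zu_sum] := geometric_bound_sums rho_ge0 rho_lt1 u_bound.
have [zv zv_sum] := geometric_bound_sums rho_ge0 rho_lt1 v_bound.
exists zu, zv; split => //.
  apply/series_sums_toP.
  rewrite (funext (sum_zq_coef_stuffle q (in_A0_YG hu) (in_A0_YG hv))).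
  by apply: cvgCM; apply/series_sums_toP.
rewrite /zq_is (funext (zq_coef_shuffle (one_sub_qX_neq0 hq) u v)).
exact: cauchy_product_sums u_bound v_bound zu_sum zv_sum.
Qed.
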